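(* Let $R$ be a commutative Noetherian ring of prime characteristic $p$ and let $G$ be an $x$-torsion-free left $R[x,f]$-module. Then there is a radical ideal $\mathfrak{b}$ of $R$ such that $\operatorname{grann}_{R[x,f]}G=\mathfrak{b}R[x,f]=\bigoplus_{n\ge0}\mathfrak{b}x^n$.
   Context: $R[x,f]$ is the Frobenius skew polynomial ring: free left $R$-module on $(x^i)_{i\ge0}$, with $xr=r^px$. $G$ is $x$-torsion-free if $xg=0$ implies $g=0$. $\operatorname{grann}_{R[x,f]}G$ is the set of $\sum r_ix^i\in R[x,f]$ such that each $r_ix^i$ annihilates $G$. *)

From HB Require Import structures.
From mathcomp Require Import all_boot all_order all_algebra.
Set Implicit Arguments. Unset Strict Implicit. Unset Printing Implicit Defensive.
Import GRing.Theory.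
Local Open Scope ring_scope.

Definition is_ideal (R : comNzRingType) (I : R -> Prop) : Prop :=
  [/\ I 0, (forall a b, I a -> I b -> I (a + b)) & (forall r a, I a -> I (r * a))].

Definition is_radical_ideal (R : comNzRingType) (I : R -> Prop) : Prop :=
  is_ideal I /\ (forall (a : R) (n : nat), I (a ^+ n.+1) -> I a).

Definition noetherian_ring (R : comNzRingType) : Prop :=
  forall I : nat -> R -> Prop,
    (forall n, is_ideal (I n)) ->
    (forall n a, I n a -> I n.+1 a) ->
    exists N, forall n, (N <= n)%N -> forall a, I n a <-> I N a.

(* A left R[x,f]-module (f = Frobenius r |-> r^p) is an R-module G together
   with the action X : G -> G of x, which is additive and satisfies
   x (r g) = (x r) g = (r^p x) g = r^p (x g).
   An element sum_i r_i x^i of R[x,f] (free left R-module on the x^i) is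
   represented by its coefficient polynomial P : {poly R} (used only as a
   coefficient sequence, NOT with the commutative polynomial product). *)
Definition frob_module (R : comNzRingType) (p : nat) (G : lmodType R)
    (X : G -> G) : Prop :=
  (forall g h : G, X (g + h) = X g + X h) /\
  (forall (r : R) (g : G), X (r *: g) = r ^+ p *: X g).

Definition skew_monomial_act (R : comNzRingType) (G : lmodType R) (X : G -> G)
    (r : R) (i : nat) (g : G) : G := r *: iter i X g.

Definition x_torsion_free (R : comNzRingType) (G : lmodType R) (X : G -> G) : Prop :=
  forall g : G, X g = 0 -> g = 0.

Definition grann (R : comNzRingType) (G : lmodType R) (X : G -> G)
    (P : {poly R}) : Prop :=
  forall (i : nat) (g : G), skew_monomial_act X P`_i i g = 0.

(* b R[x,f] = (+)_n b x^n : elements all of whose coefficients lie in b *)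
Definition graded_ext (R : comNzRingType) (b : R -> Prop) (P : {poly R}) : Prop :=
  forall i : nat, b P`_i.

From HB Require Import structures.
From mathcomp Require Import all_boot all_order all_algebra.
Local Open Scope ring_scope.
Import GRing.Theory.

(* The ideal is b = ann_R G.  Since x^i (r g) = r^(p^i) x^i g and x is
   injective, r annihilates G as soon as some power r^k with k <= p^i
   annihilates x^i G.  With k = 1 this shows that r x^i kills G iff r does,
   so grann G = b R[x,f]; with i = k = n+1 it shows that b is radical. *)

Definition module_ann {R : comNzRingType} (G : lmodType R) (r : R) : Prop :=
  forall g : G, r *: g = 0.

Lemma module_ann_ideal {R : comNzRingType} (G : lmodType R) :
  is_ideal (module_ann G).
Proof.
split=> [g | a b Ha Hb g | r a Ha g]; first by rewrite scale0r.
- by rewrite scalerDl Ha Hb addr0.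
- by rewrite -scalerA Ha scaler0.
Qed.

Section FrobeniusModule.

Variables (R : comNzRingType) (p : nat) (G : lmodType R) (X : G -> G).
Hypotheses (frobX : frob_module p X) (tfX : x_torsion_free X).

Lemma iter_frob_scale i (r : R) (g : G) :
  iter i X (r *: g) = r ^+ (p ^ i) *: iter i X g.
Proof.
have [_ XZ] := frobX; elim: i r g => [|i IH] r g /=; first by rewrite expn0 expr1.
by rewrite IH XZ -exprM expnSr.
Qed.

Lemma iter_torsion_free i (g : G) : iter i X g = 0 -> g = 0.
Proof. by elim: i g => [|i IH] g //= /tfX /IH. Qed.

Lemma module_ann_of_iter_ann (r : R) k i : (k <= p ^ i)%N ->
  (forall g, r ^+ k *: iter i X g = 0) -> module_ann G r.
Proof.
move=> le_k_pi annk g; apply: (@iter_torsion_free i).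
by rewrite iter_frob_scale -(subnK le_k_pi) exprD -scalerA annk scaler0.
Qed.

Lemma module_ann_radical : (1 < p)%N -> is_radical_ideal (module_ann G).
Proof.
move=> p_gt1; split=> [|a n ann_an g]; first exact: module_ann_ideal.
apply: (@module_ann_of_iter_ann a n.+1 n.+1) => [|h]; last exact: ann_an.
exact/ltnW/ltn_expl.
Qed.

Lemma grann_graded_module_ann (P : {poly R}) : (0 < p)%N ->
  grann X P <-> graded_ext (module_ann G) P.
Proof.
move=> p_gt0; split=> [grP i g | annP i g]; last by rewrite /skew_monomial_act annP.
apply: (@module_ann_of_iter_ann _ 1 i) => [|h]; first by rewrite expn_gt0 p_gt0.
by rewrite expr1; apply: grP.
Qed.

End FrobeniusModule.

Theorem lemma1p9 (R : comNzRingType) (p : nat) (G : lmodType R) (X : G -> G) :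
  prime p -> p \in [pchar R] -> noetherian_ring R ->
  frob_module p X -> x_torsion_free X ->
  exists b : R -> Prop, is_radical_ideal b /\
    (forall P : {poly R}, grann X P <-> graded_ext b P).
Proof.
move=> p_prime _ _ frobX tfX; exists (module_ann G); split.
- exact: module_ann_radical frobX tfX (prime_gt1 p_prime).
- by move=> P; apply: grann_graded_module_ann frobX tfX P (prime_gt0 p_prime).
Qed.
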